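(* Let $\mathbf A$ be a residuated semigroup satisfying $(x/x)y=y(x/x)$ for all $x,y\in A$, and write $1_x:=x/x$. Then for all $x,y\in A$: \[ 1_x\le 1_{xy},\ 1_y\le 1_{xy},\ 1_x\le 1_{x/y},\ 1_y\le 1_{x/y},\ 1_x\le 1_{y\backslash x},\ 1_y\le 1_{y\backslash x}, \] and consequently $1_x1_y\le 1_{xy}$, $1_x1_y\le 1_{x/y}$, $1_x1_y\le 1_{y\backslash x}$.
   Context: A residuated semigroup is a structure $\langle A,\le,\cdot,\backslash,/\rangle$ where $\langle A,\le\rangle$ is a poset, $\langle A,\cdot\rangle$ is a semigroup (we write $xy$ for $x\cdot y$), and for all $x,y,z$: $xy\le z\iff x\le z/y\iff y\le x\backslash z$. *)

Record residuated_semigroup := {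
  rs_car :> Type;
  rs_le : rs_car -> rs_car -> Prop;
  rs_mul : rs_car -> rs_car -> rs_car;
  rs_ldiv : rs_car -> rs_car -> rs_car;
  rs_rdiv : rs_car -> rs_car -> rs_car;
  rs_le_refl : forall x, rs_le x x;
  rs_le_antisym : forall x y, rs_le x y -> rs_le y x -> x = y;
  rs_le_trans : forall x y z, rs_le x y -> rs_le y z -> rs_le x z;
  rs_mulA : forall x y z, rs_mul x (rs_mul y z) = rs_mul (rs_mul x y) z;
  rs_res_r : forall x y z, rs_le (rs_mul x y) z <-> rs_le x (rs_rdiv z y);
  rs_res_l : forall x y z, rs_le (rs_mul x y) z <-> rs_le y (rs_ldiv x z)
}.

Arguments rs_le {_}.
Arguments rs_mul {_}.
Arguments rs_ldiv {_}.
Arguments rs_rdiv {_}.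

Definition unit_of {A : residuated_semigroup} (x : A) : A := rs_rdiv x x.

From Corelib Require Import ssreflect.

(* Every inequality [1_x <= 1_w] is proved in the residuated form [1_x w <= w]:
   one then moves [1_x] next to [x] (by associativity, or by centrality of the
   units) and cancels it with [1_x x <= x], or cancels a residual with
   [(x/y) y <= x] and [y (y\x) <= x].  The product inequalities follow since
   [1_x 1_y w <= 1_x w <= w]. *)

Section ResiduatedSemigroup.
Context {A : residuated_semigroup}.
Implicit Types a b c w x y : A.

Lemma le_unit_of a w : rs_le (rs_mul a w) w <-> rs_le a (unit_of w).
Proof. exact: rs_res_r. Qed.

Lemma le_rdiv a y z : rs_le (rs_mul a y) z -> rs_le a (rs_rdiv z y).
Proof. exact: (proj1 (rs_res_r _ _ _ _)). Qed.

Lemma le_ldiv a y z : rs_le (rs_mul y a) z -> rs_le a (rs_ldiv y z).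
Proof. exact: (proj1 (rs_res_l _ _ _ _)). Qed.

Lemma mul_rdiv_le x y : rs_le (rs_mul (rs_rdiv x y) y) x.
Proof. by apply/rs_res_r; apply: rs_le_refl. Qed.

Lemma mul_ldiv_le x y : rs_le (rs_mul y (rs_ldiv y x)) x.
Proof. by apply/rs_res_l; apply: rs_le_refl. Qed.

Lemma mul_unit_of_le x : rs_le (rs_mul (unit_of x) x) x.
Proof. exact: mul_rdiv_le. Qed.

Lemma le_mul2r a b c : rs_le a b -> rs_le (rs_mul a c) (rs_mul b c).
Proof.
by move=> le_ab; apply/rs_res_r; apply: rs_le_trans le_ab _; apply/rs_res_r/rs_le_refl.
Qed.

Lemma le_mul2l a b c : rs_le a b -> rs_le (rs_mul c a) (rs_mul c b).
Proof.
by move=> le_ab; apply/rs_res_l; apply: rs_le_trans le_ab _; apply/rs_res_l/rs_le_refl.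
Qed.

Lemma unit_of_le_mull x y : rs_le (unit_of x) (unit_of (rs_mul x y)).
Proof. by apply/le_unit_of; rewrite rs_mulA; apply/le_mul2r/mul_unit_of_le. Qed.

Lemma unit_of_le_rdivl x y : rs_le (unit_of x) (unit_of (rs_rdiv x y)).
Proof.
apply/le_unit_of/le_rdiv; rewrite -rs_mulA.
exact: rs_le_trans (le_mul2l _ _ _ (mul_rdiv_le x y)) (mul_unit_of_le x).
Qed.

Lemma mul_unit_of_le_unit_of x y w :
  rs_le (unit_of x) (unit_of w) -> rs_le (unit_of y) (unit_of w) ->
  rs_le (rs_mul (unit_of x) (unit_of y)) (unit_of w).
Proof.
move=> /le_unit_of le_xw /le_unit_of le_yw; apply/le_unit_of; rewrite -rs_mulA.
exact: rs_le_trans (le_mul2l _ _ _ le_yw) le_xw.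
Qed.

Section CentralUnits.
Hypothesis unit_of_central : forall x y : A, rs_mul (unit_of x) y = rs_mul y (unit_of x).

Lemma unit_of_le_mulr x y : rs_le (unit_of y) (unit_of (rs_mul x y)).
Proof.
apply/le_unit_of; rewrite unit_of_central -rs_mulA -unit_of_central.
exact/le_mul2l/mul_unit_of_le.
Qed.

Lemma unit_of_le_rdivr x y : rs_le (unit_of y) (unit_of (rs_rdiv x y)).
Proof.
apply/le_unit_of/le_rdiv; rewrite unit_of_central -rs_mulA.
exact: rs_le_trans (le_mul2l _ _ _ (mul_unit_of_le y)) (mul_rdiv_le x y).
Qed.

Lemma unit_of_le_ldivr x y : rs_le (unit_of x) (unit_of (rs_ldiv y x)).
Proof.
apply/le_unit_of/le_ldiv; rewrite rs_mulA -unit_of_central -rs_mulA.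
exact: rs_le_trans (le_mul2l _ _ _ (mul_ldiv_le x y)) (mul_unit_of_le x).
Qed.

Lemma unit_of_le_ldivl x y : rs_le (unit_of y) (unit_of (rs_ldiv y x)).
Proof.
apply/le_unit_of/le_ldiv; rewrite rs_mulA -unit_of_central.
exact: rs_le_trans (le_mul2r _ _ _ (mul_unit_of_le y)) (mul_ldiv_le x y).
Qed.

End CentralUnits.
End ResiduatedSemigroup.

Theorem lemma3p3 (A : residuated_semigroup)
  (Hcomm : forall x y : A, rs_mul (unit_of x) y = rs_mul y (unit_of x)) :
  forall x y : A,
    rs_le (unit_of x) (unit_of (rs_mul x y)) /\
    rs_le (unit_of y) (unit_of (rs_mul x y)) /\
    rs_le (unit_of x) (unit_of (rs_rdiv x y)) /\
    rs_le (unit_of y) (unit_of (rs_rdiv x y)) /\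
    rs_le (unit_of x) (unit_of (rs_ldiv y x)) /\
    rs_le (unit_of y) (unit_of (rs_ldiv y x)) /\
    rs_le (rs_mul (unit_of x) (unit_of y)) (unit_of (rs_mul x y)) /\
    rs_le (rs_mul (unit_of x) (unit_of y)) (unit_of (rs_rdiv x y)) /\
    rs_le (rs_mul (unit_of x) (unit_of y)) (unit_of (rs_ldiv y x)).
Proof.
move=> x y.
have mul_x := unit_of_le_mull x y; have mul_y := unit_of_le_mulr Hcomm x y.
have rdiv_x := unit_of_le_rdivl x y; have rdiv_y := unit_of_le_rdivr Hcomm x y.
have ldiv_x := unit_of_le_ldivr Hcomm x y; have ldiv_y := unit_of_le_ldivl Hcomm x y.
by do !split=> //; apply: mul_unit_of_le_unit_of.
Qed.
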